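(* Let $T$ be a compactum and $A$ a discrete set of entourages of $T$. Then for all $\mathbf a,\mathbf b\in A$ and every integer $k\ge1$ the set $\Psi_k(\mathbf a,\mathbf b)=\{\mathbf c\in A:\ \mathbf a-\mathbf c-\mathbf b\ (k)\}$ is finite.
   Context: Let $T$ be a compact Hausdorff space, $S^2T$ the space of unordered pairs of points of $T$ (diagonal allowed), $\Delta^2T$ the diagonal. An entourage is a neighborhood of $\Delta^2T$ in $S^2T$. For an entourage $\mathbf e$, $\Delta_{\mathbf e}$ is the graph distance on $T$ of the graph with vertex set $T$ and edges the pairs in $\mathbf e$; $\Delta_{\mathbf e}(a,b)=\inf_{x\in a,y\in b}\Delta_{\mathbf e}(x,y)$. A set is $\mathbf e$-small if its $\Delta_{\mathbf e}$-diameter is $\le1$. Entourages $\mathbf a,\mathbf b$ are unlinked ($\mathbf a\bowtie\mathbf b$) if $T=a\cup b$ for some $\mathbf a$-small $a$ and $\mathbf b$-small $b$; otherwise linked ($\mathbf a\#\mathbf b$). Standing conventions: every entourage considered is linked with itself and $T$ has $\Delta_{\mathbf a}$-diameter $>4$. For $\mathbf a\bowtie\mathbf b$, $\mathrm{sh}_{\mathbf a}\mathbf b=\bigcap\{a: a\ \mathbf a\text{-small},\ T\setminus a\ \mathbf b\text{-small}\}$; $\mathbf a-\mathbf c-\mathbf b\ (k)$ means $\mathbf a\bowtie\mathbf c\bowtie\mathbf b$ and $\Delta_{\mathbf c}(\mathrm{sh}_{\mathbf c}\mathbf a,\mathrm{sh}_{\mathbf c}\mathbf b)>k$. A set $A$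 of entourages is discrete if for every entourage $\mathbf w$ only finitely many $\mathbf a\in A$ satisfy $\mathbf a\#\mathbf w$. *)

From Stdlib Require Import List Arith.

Set Implicit Arguments.

Section Top.
Variable T : Type.
Variable is_open : (T -> Prop) -> Prop.

Definition is_topology : Prop :=
  is_open (fun _ => True) /\
  (forall U V, is_open U -> is_open V -> is_open (fun x => U x /\ V x)) /\
  (forall F : (T -> Prop) -> Prop, (forall U, F U -> is_open U) ->
      is_open (fun x => exists U, F U /\ U x)).

Definition compact : Prop :=
  forall F : (T -> Prop) -> Prop,
    (forall U, F U -> is_open U) ->
    (forall x, exists U, F U /\ U x) ->
    exists l : list (T -> Prop),
      (forall U, In U l -> F U) /\ (forall x, exists U, In U l /\ U x).

Definition hausdorff : Prop :=
  forall x y, x <> y -> exists U V, is_open U /\ is_open V /\ U x /\ V y /\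
    (forall z, U z -> V z -> False).

Definition compactum : Prop := is_topology /\ compact /\ hausdorff.

Definition prod_open (W : T -> T -> Prop) : Prop :=
  forall x y, W x y -> exists U V, is_open U /\ is_open V /\ U x /\ V y /\
    (forall u v, U u -> V v -> W u v).

(* An entourage: a neighbourhood of the diagonal in S^2 T.  A subset of
   S^2 T is represented by a symmetric relation on T (the set of pairs
   (x,y) with {x,y} in it); it is a neighbourhood of the diagonal of S^2 T
   iff its preimage in T x T is a neighbourhood of the diagonal of T x T
   (the quotient map T x T -> S^2 T is open). *)
Definition entourage (E : T -> T -> Prop) : Prop :=
  (forall x y, E x y -> E y x) /\
  exists W, prod_open W /\ (forall x, W x x) /\ (forall x y, W x y -> E x y).
End Top.

Section Ent.
Variable T : Type.

Fixpoint dist_le (E : T -> T -> Prop) (n : nat) (x y : T) : Prop :=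
  match n with
  | 0 => x = y
  | S m => dist_le E m x y \/ exists z, dist_le E m x z /\ E z y
  end.

Definition small (E : T -> T -> Prop) (a : T -> Prop) : Prop :=
  forall x y, a x -> a y -> dist_le E 1 x y.

Definition diam_gt (E : T -> T -> Prop) (n : nat) : Prop :=
  exists x y, ~ dist_le E n x y.

(* Delta_E(a,b) > k, with Delta_E(a,b) = inf_{x in a, y in b} Delta_E(x,y) *)
Definition setdist_gt (E : T -> T -> Prop) (a b : T -> Prop) (k : nat) : Prop :=
  forall x y, a x -> b y -> ~ dist_le E k x y.

Definition unlinked (A B : T -> T -> Prop) : Prop :=
  exists a b : T -> Prop, small A a /\ small B b /\ (forall x, a x \/ b x).

Definition linked (A B : T -> T -> Prop) : Prop := ~ unlinked A B.

Definition sh (A B : T -> T -> Prop) : T -> Prop :=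
  fun x => forall a : T -> Prop,
    small A a -> small B (fun y => ~ a y) -> a x.

Definition between (A C B : T -> T -> Prop) (k : nat) : Prop :=
  unlinked A C /\ unlinked C B /\ setdist_gt C (sh C A) (sh C B) k.

Definition finite_set (S : (T -> T -> Prop) -> Prop) : Prop :=
  exists l : list (T -> T -> Prop), forall c, S c -> In c l.

Definition discrete (is_open : (T -> Prop) -> Prop)
    (A : (T -> T -> Prop) -> Prop) : Prop :=
  forall W, entourage is_open W -> finite_set (fun a => A a /\ linked a W).

Definition Psi (A : (T -> T -> Prop) -> Prop) (k : nat)
    (a b : T -> T -> Prop) : (T -> T -> Prop) -> Prop :=
  fun c => A c /\ between a c b k.
End Ent.

(* If [a - c - b (k)], then [c] is linked with the entourage [a ∩ b]: were
   [T = p ∪ q] with [p] c-small and [q] (a ∩ b)-small, the complement of [p]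
   would be both a-small and b-small, so [p] would contain [sh_c a] and
   [sh_c b]; these shadows are nonempty, and [p] has c-diameter [<= 1 <= k],
   contradicting [Δ_c(sh_c a, sh_c b) > k].  Discreteness of [A] leaves only
   finitely many such [c]. *)
From Stdlib Require Import PeanoNat Classical.

Set Implicit Arguments.
Unset Strict Implicit.

Section Shadows.
Variable T : Type.
Implicit Types (a b c E F : T -> T -> Prop) (p q : T -> Prop).

Lemma dist_le_mono E n m x y :
  n <= m -> dist_le E n x y -> dist_le E m x y.
Proof. induction 1; simpl; auto. Qed.

Lemma dist_le_add E m n x z y :
  dist_le E m x z -> dist_le E n z y -> dist_le E (m + n) x y.
Proof.
  revert y; induction n as [|n IH]; intros y Hxz Hzy.
  - simpl in Hzy; subst; now rewrite Nat.add_0_r.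
  - rewrite Nat.add_succ_r; simpl in Hzy |- *.
    destruct Hzy as [Hzy | [w [Hzw Hwy]]]; [left | right; exists w]; eauto.
Qed.

Lemma diam_gt_anti E m n : m <= n -> diam_gt E n -> diam_gt E m.
Proof.
  intros Hmn [x [y Hxy]]; exists x, y; intro H.
  exact (Hxy (dist_le_mono Hmn H)).
Qed.

Lemma small_sub E p q : (forall x, p x -> q x) -> small E q -> small E p.
Proof. intros Hpq Hq x y Hx Hy; auto. Qed.

Lemma small_mono E F p :
  (forall x y, E x y -> F x y) -> small E p -> small F p.
Proof.
  intros HEF Hp x y Hx Hy.
  destruct (Hp x y Hx Hy) as [H | [z [Hxz Hzy]]]; [now left | right; eauto].
Qed.

(* A shadow is the intersection of the c-small sets with a-small complement;
   two such sets missing [x] and [y] would cover [T], and [Δ_a(x, y) <= 2]. *)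
Lemma sh_nonempty c a : linked c c -> diam_gt a 2 -> exists x, sh c a x.
Proof.
  intros Hcc [x [y Hxy]].
  apply NNPP; intro Hempty.
  assert (Hout : forall z, exists p, small c p /\ small a (fun t => ~ p t) /\ ~ p z).
  { intro z; apply NNPP; intro Hz; apply Hempty; exists z; intros p Hp Hcp.
    apply NNPP; intro Hpz; apply Hz; eauto. }
  destruct (Hout x) as [p [Hp [Hcp Hpx]]], (Hout y) as [q [Hq [Hcq Hqy]]].
  apply Hcc; exists p, q; repeat split; auto.
  intro z; destruct (classic (p z)) as [|Hpz]; [now left|].
  destruct (classic (q z)) as [|Hqz]; [now right|].
  exfalso; apply Hxy.
  exact (dist_le_add (m := 1) (n := 1) (Hcp x z Hpx Hpz) (Hcq z y Hqz Hqy)).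
Qed.

Lemma between_linked_inter a b c k :
  linked c c -> diam_gt a 2 -> diam_gt b 2 -> 1 <= k ->
  between a c b k -> linked c (fun x y => a x y /\ b x y).
Proof.
  intros Hcc Ha Hb Hk [_ [_ Hdist]] [p [q [Hp [Hq Hcover]]]].
  assert (Hcompl : forall E, (forall x y, a x y /\ b x y -> E x y) ->
                             small E (fun t => ~ p t)).
  { intros E HE; apply (small_sub (q := q)).
    - intros t Ht; destruct (Hcover t); tauto.
    - exact (small_mono HE Hq). }
  destruct (sh_nonempty Hcc Ha) as [x Hx], (sh_nonempty Hcc Hb) as [y Hy].
  apply (Hdist x y Hx Hy), (dist_le_mono Hk), Hp.
  - apply Hx; [exact Hp | apply Hcompl; tauto].
  - apply Hy; [exact Hp | apply Hcompl; tauto].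
Qed.

End Shadows.

Lemma entourage_inter (T : Type) (is_open : (T -> Prop) -> Prop) E F :
  is_topology is_open -> entourage is_open E -> entourage is_open F ->
  entourage is_open (fun x y => E x y /\ F x y).
Proof.
  intros [_ [Hinter _]] [HEsym [WE [HWE [HdE HWEE]]]] [HFsym [WF [HWF [HdF HWFF]]]].
  split; [intros x y [Hxy Hxy']; auto|].
  exists (fun x y => WE x y /\ WF x y); split; [|split].
  - intros x y [Hx Hy].
    destruct (HWE x y Hx) as [U1 [V1 [HU1 [HV1 [Hx1 [Hy1 H1]]]]]].
    destruct (HWF x y Hy) as [U2 [V2 [HU2 [HV2 [Hx2 [Hy2 H2]]]]]].
    exists (fun t => U1 t /\ U2 t), (fun t => V1 t /\ V2 t).
    do 4 (split; auto).
    intros u v [Hu1 Hu2] [Hv1 Hv2]; auto.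
  - intro x; auto.
  - intros x y [Hx Hy]; auto.
Qed.

Theorem lemma3p19 (T : Type) (is_open : (T -> Prop) -> Prop)
  (HT : compactum is_open)
  (A : (T -> T -> Prop) -> Prop)
  (HAent : forall a, A a -> entourage is_open a)
  (HAconv : forall a, A a -> linked a a /\ diam_gt a 4)
  (HAdisc : discrete is_open A) :
  forall a b, A a -> A b -> forall k : nat, 1 <= k ->
    finite_set (Psi A k a b).
Proof.
  intros a b Ha Hb k Hk.
  assert (Hdiam : forall e, A e -> diam_gt e 2).
  { intros e He; apply (diam_gt_anti (n := 4)); [auto | apply HAconv, He]. }
  destruct (HAdisc _ (entourage_inter (proj1 HT) (HAent a Ha) (HAent b Hb)))
    as [l Hl].
  exists l; intros c [Hc Hbetween]; apply Hl; split; [exact Hc|].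
  apply (between_linked_inter (k := k)); auto; apply HAconv, Hc.
Qed.
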